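(* Let $n\ge1$ and let $M$ be the set of maps $\mu:\{2,\dots,n+1\}\to\{1,\dots,n\}$ with $\mu(2)=1$ and $\mu(j)<j$ for all $j$. For each $\mu\in M$ there is a finite sequence of acceptable moves which transforms $\mu$ into an element of $M$ in upper echelon form.
   Context: An acceptable move on $\mu\in M$: if for some $j\in\{2,\dots,n\}$ one has $\mu(j+1)<\mu(j)$, replace $\mu$ by $(j,j+1)\circ\mu\circ(j,j+1)$, where $(j,j+1)$ is the transposition of $j$ and $j+1$. (Graphically, $\mu$ marks the entry $B_{\mu(m),m}$ in column $m$ of an upper triangular $n\times n$ array with rows $1,\dots,n$ and columns $2,\dots,n+1$; a move swaps the marked entries of columns $j$ and $j+1$ and simultaneously of rows $j$ and $j+1$.) $\mu$ is in upper echelon form if every marked entry in a higher row lies to the left of every marked entry in a lower row, i.e. $\mu(m)<\mu(m')$ implies $m<m'$ (equivalently, $\mu$ is nondecreasing). *)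

From mathcomp Require Import all_boot.
Set Implicit Arguments. Unset Strict Implicit. Unset Printing Implicit Defensive.

(* A map mu : {2,...,n+1} -> {1,...,n} is represented by a function nat -> nat;
   only its values on the domain {2,...,n+1} matter (all notions below only
   look at those values, and moves preserve the domain). *)

Definition in_M (n : nat) (mu : nat -> nat) : Prop :=
  mu 2 = 1 /\
  (forall j, 2 <= j <= n.+1 -> 1 <= mu j <= n) /\
  (forall j, 2 <= j <= n.+1 -> mu j < j).

Definition transp (j : nat) (x : nat) : nat :=
  if x == j then j.+1 else if x == j.+1 then j else x.

Definition acceptable_move (n : nat) (mu nu : nat -> nat) : Prop :=
  exists j, [/\ 2 <= j <= n, mu j.+1 < mu j & nu = transp j \o mu \o transp j].

Inductive moves (n : nat) : (nat -> nat) -> (nat -> nat) -> Prop :=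
| moves_refl mu : moves n mu mu
| moves_step mu nu rho : acceptable_move n mu nu -> moves n nu rho -> moves n mu rho.

Definition upper_echelon (n : nat) (mu : nat -> nat) : Prop :=
  forall m m', 2 <= m <= n.+1 -> 2 <= m' <= n.+1 -> mu m < mu m' -> m < m'.

From mathcomp Require Import all_boot.
From mathcomp Require Import zify.

Set Implicit Arguments.
Unset Strict Implicit.
Unset Printing Implicit Defensive.

(* A move at a descent j lowers the entry in column j from mu(j) to mu(j+1)
   and leaves the columns x < j alone: there mu(x) < x < j, and both mu(j) and
   mu(j+1) are < j, so the transposition (j, j+1) fixes all these values.
   Hence the word (mu(2), ..., mu(n+1)) decreases lexicographically; read as a
   base-(n+1) numeral it is a strictly decreasing natural number, so repeatedly
   moving at descents terminates, and a map without descents is nondecreasing,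
   i.e. in upper echelon form. *)

Definition numeral (B : nat) (s : seq nat) : nat :=
  foldl (fun acc d => acc * B + d) 0 s.

Lemma foldl_numeral_lt B a b s t :
    size s = size t -> all (fun d => d < B) s -> all (fun d => d < B) t ->
  a < b -> foldl (fun acc d => acc * B + d) a s < foldl (fun acc d => acc * B + d) b t.
Proof.
elim: s t a b => [|x s IHs] [|y t] a b //= [size_st] /andP[ltxB ltsB] /andP[_ lttB] ltab.
by apply: IHs => //; nia.
Qed.

Lemma numeral_cat_lt B p a b s t :
    size s = size t -> all (fun d => d < B) s -> all (fun d => d < B) t -> a < b ->
  numeral B (p ++ a :: s) < numeral B (p ++ b :: t).
Proof.
move=> size_st ltsB lttB ltab; rewrite /numeral !foldl_cat /=.
by apply: foldl_numeral_lt => //; rewrite ltn_add2l.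
Qed.

Lemma iota_cat_at m n j :
  m <= j < m + n -> iota m n = iota m (j - m) ++ j :: iota j.+1 (m + n - j.+1).
Proof.
move=> lejn; rewrite {1}(_ : n = j - m + (m + n - j.+1).+1); last by lia.
by rewrite iotaD subnKC //; lia.
Qed.

Lemma transp_small j x : x < j -> transp j x = x.
Proof. by rewrite /transp => ltxj; rewrite !ifN_eq //; lia. Qed.

Lemma transpK j : involutive (transp j).
Proof. by move=> x; rewrite /transp; repeat case: ifP => /eqP; lia. Qed.

Lemma transp_dom n j x : 2 <= j <= n -> 2 <= x <= n.+1 -> 2 <= transp j x <= n.+1.
Proof. by rewrite /transp; repeat case: ifP => /eqP; lia. Qed.

Lemma transp_gt0 j v : 0 < j -> 0 < v -> 0 < transp j v.
Proof. by rewrite /transp; repeat case: ifP => /eqP; lia. Qed.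

Lemma transp_ltn j v x : v < x -> (v, x) != (j, j.+1) -> transp j v < transp j x.
Proof.
rewrite /transp xpair_eqE => ltvx not_jj1.
by repeat case: ifP => /eqP; lia.
Qed.

Definition word (n : nat) (f : nat -> nat) : seq nat := map f (iota 2 n).

Lemma in_M_ltn n f x : in_M n f -> 2 <= x <= n.+1 -> f x < n.+1.
Proof. by case=> _ [f_dom _] /f_dom; lia. Qed.

Lemma nondecreasing_upper_echelon n f :
  (forall x, 2 <= x <= n -> f x <= f x.+1) -> upper_echelon n f.
Proof.
move=> f_step m m' m_dom m'_dom; apply: contraTT; rewrite -!leqNgt => le_m'm.
apply: (@homo_leq_in _ [pred x | 2 <= x <= n.+1] f leq) => //=; first exact: leq_trans.
- by move=> x y; rewrite !inE => x_dom y_dom z; rewrite inE; lia.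
- by move=> x; rewrite !inE => x_dom x1_dom; apply: f_step; lia.
Qed.

Lemma descent_or_upper_echelon n f :
  (exists2 j, 2 <= j <= n & f j.+1 < f j) \/ upper_echelon n f.
Proof.
have [/hasP[j]|no_descent] := boolP (has (fun j => f j.+1 < f j) (iota 2 n.-1)).
  by rewrite mem_iota => j_dom descent; left; exists j => //; lia.
right; apply: nondecreasing_upper_echelon => x x_dom; rewrite leqNgt.
by apply: contra no_descent => descent; apply/hasP; exists x; rewrite ?mem_iota; lia.
Qed.

Section Move.

Variables (n j : nat) (mu : nat -> nat).
Hypotheses (muM : in_M n mu) (j_dom : 2 <= j <= n) (descent : mu j.+1 < mu j).

Let nu := transp j \o mu \o transp j.

Lemma descent_lt : mu j.+1 < mu j < j.
Proof. by case: muM => _ [_ mu_lt]; rewrite descent mu_lt //; lia. Qed.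

Lemma descent_gt2 : 2 < j.
Proof.
case: muM => mu2 [mu_dom _]; have := mu_dom j.+1; have := descent.
by case: (j =P 2) => [j2|]; rewrite ?j2 ?mu2; lia.
Qed.

Lemma move_eq_below x : 2 <= x < j -> nu x = mu x.
Proof.
case: muM => _ [_ mu_lt] x_dom; rewrite /nu /= (@transp_small j x); last by lia.
by rewrite transp_small //; have := mu_lt x; lia.
Qed.

Lemma move_at : nu j = mu j.+1.
Proof.
have transp_jj : transp j j = j.+1 by rewrite /transp eqxx.
by rewrite /nu /= transp_jj transp_small //; have := descent_lt; lia.
Qed.

Lemma move_in_M : in_M n nu.
Proof.
have lt2j := descent_gt2; have [mu2 [mu_dom mu_lt]] := muM.
have nu_lt x : 2 <= x <= n.+1 -> nu x < x.
  move=> x_dom; set y := transp j x.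
  have y_dom : 2 <= y <= n.+1 by exact: transp_dom.
  rewrite /nu /= -[x in _ < x](transpK j) -/y; apply: transp_ltn; first exact: mu_lt.
  by rewrite xpair_eqE; have := descent_lt; case: (y =P j.+1) => [->|]; lia.
split; [by rewrite move_eq_below ?mu2; lia | split=> // x x_dom].
suff: 0 < nu x by have := nu_lt x x_dom; lia.
rewrite /nu /=; apply: transp_gt0; first lia.
by have /mu_dom := transp_dom j_dom x_dom; lia.
Qed.

Lemma move_numeral_lt : numeral n.+1 (word n nu) < numeral n.+1 (word n mu).
Proof.
have [nuM lt2j] := (move_in_M, descent_gt2).
rewrite /word (@iota_cat_at 2 n j) ?map_cat /=; last by lia.
have -> : map nu (iota 2 (j - 2)) = map mu (iota 2 (j - 2)).
  by apply/eq_in_map => x; rewrite mem_iota => x_dom; apply: move_eq_below; lia.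
apply: numeral_cat_lt; rewrite ?size_map ?move_at //.
  by rewrite all_map; apply/allP=> x; rewrite mem_iota => x_dom; apply: in_M_ltn nuM _; lia.
by rewrite all_map; apply/allP=> x; rewrite mem_iota => x_dom; apply: in_M_ltn muM _; lia.
Qed.

End Move.

Theorem lemma3p2 (n : nat) (mu : nat -> nat) :
  1 <= n -> in_M n mu ->
  exists nu, moves n mu nu /\ in_M n nu /\ upper_echelon n nu.
Proof.
move=> _; have [k] := ubnP (numeral n.+1 (word n mu)).
elim: k mu => // k IHk mu lt_mu_k muM.
have [[j j_dom descent]|mu_echelon] := descent_or_upper_echelon n mu; last first.
  by exists mu; split; first exact: moves_refl.
have [|nu [mu_nu nu_goal]] := IHk (transp j \o mu \o transp j) _ (move_in_M muM j_dom descent).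
  exact: leq_trans (move_numeral_lt muM j_dom descent) _.
by exists nu; split=> //; apply: moves_step mu_nu; exists j.
Qed.
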